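(* Let $a,n\in\mathbb{N}$, $k_1,\ldots,k_n\in\mathbb{N}$, let $f_1,\ldots,f_n$, $g_1,\ldots,g_n$, $h_1,\ldots,h_n$ be arbitrary arithmetic functions, and let $\omega$ be a completely additive function. Writing in each summand $M=\operatorname{lcm}(d_1,\ldots,d_n)$ and $L=K/M$, we have $$U_{\omega}^{(a)}(k_1,\ldots,k_n)=\sum_{d_1|k_1,\ldots,d_n|k_n}\omega(M^a)\Bigl(\prod_{i=1}^n f_i(d_i)g_i\Bigl(\frac{k_i}{d_i}\Bigr)\Bigr)\sum_{\ell=1}^{L^a}\prod_{i=1}^n h_i\Bigl(\Bigl(\frac{M}{d_i}\Bigr)^a\ell\Bigr)+\sum_{d_1|k_1,\ldots,d_n|k_n}\Bigl(\prod_{i=1}^n f_i(d_i)g_i\Bigl(\frac{k_i}{d_i}\Bigr)\Bigr)\sum_{\ell=1}^{L^a}\omega(\ell)\prod_{i=1}^n h_i\Bigl(\Bigl(\frac{M}{d_i}\Bigr)^a\ell\Bigr).$$ If in addition $h_1,\ldots,h_n$ are completely multiplicative, then $$U_{\omega}^{(a)}(k_1,\ldots,k_n)=\sum_{d_1|k_1,\ldots,d_n|k_n}\omega(M^a)\Bigl(\prod_{i=1}^n f_i(d_i)g_i\Bigl(\frac{k_i}{d_i}\Bigr)h_i\Bigl(\frac{M}{d_i}\Bigr)^a\Bigr)\sum_{\ell=1}^{L^a}\prod_{i=1}^n h_i(\ell)+\sum_{d_1|k_1,\ldots,d_n|k_n}\Bigl(\prod_{i=1}^n f_i(d_i)g_i\Bigl(\frac{k_i}{d_i}\Bigr)h_i\Bigl(\frac{M}{d_i}\Bigr)^a\Bigr)\sum_{\ell=1}^{L^a}\omega(\ell)\prod_{i=1}^n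 h_i(\ell).$$
   Context: An arithmetic function is a map $\mathbb{N}\to\mathbb{C}$. $\omega$ is completely additive if $\omega(mn)=\omega(m)+\omega(n)$ for all $m,n\in\mathbb{N}$; $h$ is completely multiplicative if $h(1)=1$ and $h(mn)=h(m)h(n)$ for all $m,n$. For $a\in\mathbb{N}$ and arithmetic functions $f,g,h$, $s^{(a)}_{f,g,h}(k,j)=\sum_{d|k,\ d^a|j} f(d)\,g(k/d)\,h(j/d^a)$ for $k,j\in\mathbb{N}$. Given $k_1,\ldots,k_n$, $K=\operatorname{lcm}(k_1,\ldots,k_n)$ and $U_{\omega}^{(a)}(k_1,\ldots,k_n)=\sum_{j=1}^{K^a}\omega(j)\prod_{i=1}^n s^{(a)}_{f_i,g_i,h_i}(k_i,j)$. *)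

From HB Require Import structures.
From mathcomp Require Import all_boot all_order all_algebra all_field.
Set Implicit Arguments. Unset Strict Implicit. Unset Printing Implicit Defensive.
Import Order.TTheory GRing.Theory Num.Theory.
Local Open Scope ring_scope.

(* Arithmetic functions N -> C, modelled as nat -> algC (value at 0 irrelevant). *)
Definition arith := nat -> algC.

Definition completely_additive (w : arith) : Prop :=
  forall m n : nat, (0 < m)%N -> (0 < n)%N -> w (m * n)%N = w m + w n.

Definition completely_multiplicative (h : arith) : Prop :=
  h 1%N = 1 /\ forall m n : nat, (0 < m)%N -> (0 < n)%N -> h (m * n)%N = h m * h n.

Definition s_fun (a : nat) (f g h : arith) (k j : nat) : algC :=
  \sum_(d <- divisors k | (d ^ a %| j)%N) f d * g (k %/ d)%N * h (j %/ d ^ a)%N.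

Definition lcm_fam (n : nat) (k : 'I_n -> nat) : nat := \big[lcmn/1%N]_(i < n) k i.

Definition U_fun (a n : nat) (w : arith) (f g h : 'I_n -> arith) (k : 'I_n -> nat)
  : algC :=
  \sum_(1 <= j < (lcm_fam k) ^ a + 1) w j * \prod_(i < n) s_fun a (f i) (g i) (h i) (k i) j.

From HB Require Import structures.
From mathcomp Require Import all_boot all_order all_algebra all_field.
From mathcomp Require Import zify ring.
Import Order.TTheory GRing.Theory Num.Theory.

(* Expanding each s^(a)(k_i, j) as a sum over d_i | k_i and multiplying out, the
   condition d_i^a | j for all i becomes lcm(d)^a | j.  So for a fixed divisor
   tuple d with M = lcm(d), only the multiples j = M^a l with l <= (K/M)^a
   contribute, and at those j/d_i^a = (M/d_i)^a l.  Complete additivity splits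
   w(M^a l) = w(M^a) + w(l), which gives the two sums; complete multiplicativity
   then pulls h_i((M/d_i)^a) out of h_i((M/d_i)^a l). *)

Lemma lcmn_expn m n e : (lcmn m n ^ e = lcmn (m ^ e) (n ^ e))%N.
Proof.
have [->|e_gt0] := posnP e; first by rewrite !expn0 lcmn1.
have [->|m_gt0] := posnP m; first by rewrite lcm0n exp0n // lcm0n.
have [->|n_gt0] := posnP n; first by rewrite lcmn0 exp0n // lcmn0.
set d := gcdn m n; have d_gt0 : (0 < d)%N by rewrite gcdn_gt0 m_gt0.
have Em : m = (m %/ d * d)%N by rewrite divnK // dvdn_gcdl.
have En : n = (n %/ d * d)%N by rewrite divnK // dvdn_gcdr.
set m' := m %/ d; set n' := n %/ d.
have co_mn' : coprime m' n'.
  have := muln_gcdl m' n' d; rewrite -Em -En -/d => Ed.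
  by rewrite /coprime -(eqn_pmul2r d_gt0) mul1n Ed.
have lcm_coprime x y : coprime x y -> lcmn x y = (x * y)%N.
  by move=> /eqP co_xy; have := muln_lcm_gcd x y; rewrite co_xy muln1.
rewrite Em En -muln_lcml !expnMn -muln_lcml lcm_coprime // lcm_coprime ?expnMn //.
exact: coprimeXr (coprimeXl _ co_mn').
Qed.

Section LcmFamily.

Context {n : nat} (d : 'I_n -> nat).

Lemma lcm_fam_expn e : (lcm_fam d ^ e = lcm_fam (fun i => d i ^ e))%N.
Proof. exact: (big_morph (fun x => x ^ e)%N (fun x y => lcmn_expn x y e) (exp1n e)). Qed.

Lemma lcm_fam_gt0 : (forall i, 0 < d i)%N -> (0 < lcm_fam d)%N.
Proof.
move=> d_gt0; apply: (big_ind (fun x => 0 < x)%N) => // x y x_gt0 y_gt0.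
by rewrite lcmn_gt0 x_gt0.
Qed.

Lemma dvdn_lcm_fam i : (d i %| lcm_fam d)%N.
Proof. exact: biglcmn_sup. Qed.

Lemma dvdn_lcm_famP m : reflect (forall i, d i %| m)%N (lcm_fam d %| m)%N.
Proof.
apply: (iffP (dvdn_biglcmP _ _ _)) => d_dvd i; first exact: d_dvd.
by move=> _; apply: d_dvd.
Qed.

End LcmFamily.

Local Open Scope ring_scope.

Lemma sum_nat_dvdn (V : nmodType) (G : nat -> V) (N T : nat) : (0 < N)%N ->
  \sum_(1 <= j < (N * T).+1 | (N %| j)%N) G j = \sum_(1 <= l < T.+1) G (N * l)%N.
Proof.
move=> N_gt0; elim: T => [|T IHT]; first by rewrite muln0 !big_geq.
rewrite (@big_cat_nat _ _ _ (N * T).+1) /= ?IHT; last 2 first.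
- by [].
- by rewrite ltnS mulnS leq_addl.
rewrite [RHS]big_nat_recr //=; congr (_ + _).
rewrite big_mkcond big_nat_recr /=; last by rewrite mulnS; lia.
rewrite dvdn_mulr // big_nat_cond big1 ?add0r // => j /andP[/andP[lo hi] _].
case: ifP => // /dvdnP[q Ej]; exfalso; move: lo hi; rewrite Ej mulnS => lo hi.
have : (T < q)%N by rewrite -(ltn_pmul2r N_gt0); lia.
have : (q < T.+1)%N by rewrite -(ltn_pmul2r N_gt0); lia.
lia.
Qed.

Lemma divn_expnM m d e l : (0 < d)%N -> (d %| m)%N ->
  ((m ^ e * l) %/ d ^ e = (m %/ d) ^ e * l)%N.
Proof.
move=> d_gt0 d_dvd_m.
by rewrite -{1}(divnK d_dvd_m) expnMn mulnAC mulnK // expn_gt0 d_gt0.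
Qed.

Lemma completely_multiplicative_expn (h : arith) m e :
  completely_multiplicative h -> (0 < m)%N -> h (m ^ e)%N = h m ^+ e.
Proof.
case=> h1 hM m_gt0; elim: e => [|e IHe]; first by rewrite expn0 expr0 h1.
by rewrite expnS exprS hM ?IHe // expn_gt0 m_gt0.
Qed.

Lemma completely_multiplicative_expnM (h : arith) m e l :
  completely_multiplicative h -> (0 < m)%N -> (0 < l)%N ->
  h (m ^ e * l)%N = h m ^+ e * h l.
Proof.
move=> hmul m_gt0 l_gt0; have [_ hM] := hmul.
by rewrite hM ?expn_gt0 ?m_gt0 // completely_multiplicative_expn.
Qed.

(* Divisors of k are drawn from 'I_K.+1 for any bound K >= k, so that tuples of
   divisors form the finite type {ffun 'I_n -> 'I_K.+1}. *)
Lemma s_fun_ordE a (f g h : arith) k K j : (0 < k)%N -> (k <= K)%N ->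
  s_fun a f g h k j = \sum_(d < K.+1 | (d %| k)%N && (d ^ a %| j)%N)
                         f d * g (k %/ d)%N * h (j %/ d ^ a)%N.
Proof.
move=> k_gt0 k_le_K; rewrite /s_fun.
rewrite -(big_mkord (fun d => (d %| k)%N && (d ^ a %| j)%N)
                    (fun d => f d * g (k %/ d)%N * h (j %/ d ^ a)%N)).
rewrite /index_iota subn0 -big_filter_cond; apply: perm_big.
apply: uniq_perm; [exact: divisors_uniq | exact: filter_uniq (iota_uniq _ _) |].
move=> d; rewrite mem_filter mem_iota add0n -dvdn_divisors //.
case d_dvd_k: (d %| k)%N => //=.
by rewrite ltnS (leq_trans (dvdn_leq k_gt0 d_dvd_k)).
Qed.

Lemma prod_s_funE a n k K (f g h : 'I_n -> arith) j :
  (forall i, 0 < k i)%N -> (forall i, k i <= K)%N ->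
  \prod_(i < n) s_fun a (f i) (g i) (h i) (k i) j =
  \sum_(d : {ffun 'I_n -> 'I_K.+1} | [forall i, (d i %| k i)%N])
     (if (lcm_fam (fun i => nat_of_ord (d i)) ^ a %| j)%N then
       \prod_(i < n) (f i (d i) * g i (k i %/ d i)%N * h i (j %/ d i ^ a)%N)
     else 0).
Proof.
move=> k_gt0 k_le_K.
under eq_bigr => i _ do rewrite (s_fun_ordE _ _ _ _ _ _ j (k_gt0 i) (k_le_K i)).
rewrite bigA_distr_big_dep -big_mkcondr; apply: eq_bigl => d /=.
rewrite lcm_fam_expn; apply/familyP/andP => [d_dvd | [/forallP d_dvd_k]].
  split; first by apply/forallP => i; case/andP: (d_dvd i).
  by apply/dvdn_lcm_famP => i; case/andP: (d_dvd i).
by move/dvdn_lcm_famP => d_dvd_j i; rewrite unfold_in /= d_dvd_k d_dvd_j.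
Qed.

Section Expansion.

Variables (a n : nat) (k : 'I_n -> nat) (f g h : 'I_n -> arith) (w : arith).
Hypothesis k_gt0 : forall i, (0 < k i)%N.

Local Notation K := (lcm_fam k).
Local Notation fg d := (\prod_(i < n) (f i (d i) * g i (k i %/ d i)%N)).

Lemma sum_multiples_lcm (d : 'I_n -> nat) :
  completely_additive w -> (forall i, d i %| k i)%N ->
  let M := lcm_fam d in
  \sum_(1 <= j < K ^ a + 1 | (M ^ a %| j)%N)
     w j * \prod_(i < n) (f i (d i) * g i (k i %/ d i)%N * h i (j %/ d i ^ a)%N)
  = w (M ^ a)%N * fg d * \sum_(1 <= l < (K %/ M) ^ a + 1)
                            \prod_(i < n) h i ((M %/ d i) ^ a * l)%N
    + fg d * \sum_(1 <= l < (K %/ M) ^ a + 1)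
               w l * \prod_(i < n) h i ((M %/ d i) ^ a * l)%N.
Proof.
move=> w_add d_dvd_k M.
have d_gt0 i : (0 < d i)%N := dvdn_gt0 (k_gt0 i) (d_dvd_k i).
have M_gt0 : (0 < M)%N by apply: lcm_fam_gt0.
have M_dvd_K : (M %| K)%N.
  by apply/dvdn_lcm_famP => i; exact: dvdn_trans (d_dvd_k i) (dvdn_lcm_fam k i).
have EK : (K ^ a + 1 = (M ^ a * (K %/ M) ^ a).+1)%N.
  by rewrite -expnMn mulnC divnK // addn1.
rewrite EK sum_nat_dvdn ?expn_gt0 ?M_gt0 // !addn1 !mulr_sumr -big_split /=.
apply: eq_big_nat => l /andP[l_gt0 _].
rewrite w_add ?expn_gt0 ?M_gt0 //.
under eq_bigr => i _ do rewrite divn_expnM ?d_gt0 ?dvdn_lcm_fam //.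
rewrite big_split /=; ring.
Qed.

Lemma U_fun_expansion : completely_additive w ->
  U_fun a w f g h k =
     \sum_(d : {ffun 'I_n -> 'I_(K.+1)} | [forall i, (d i %| k i)%N])
        w ((lcm_fam (fun i => nat_of_ord (d i))) ^ a)%N * fg d
        * \sum_(1 <= l < (K %/ lcm_fam (fun i => nat_of_ord (d i))) ^ a + 1)
            \prod_(i < n) h i ((lcm_fam (fun i => nat_of_ord (d i)) %/ d i) ^ a * l)%N
   + \sum_(d : {ffun 'I_n -> 'I_(K.+1)} | [forall i, (d i %| k i)%N])
        fg d
        * \sum_(1 <= l < (K %/ lcm_fam (fun i => nat_of_ord (d i))) ^ a + 1)
            w l * \prod_(i < n) h i ((lcm_fam (fun i => nat_of_ord (d i)) %/ d i) ^ a * l)%N.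
Proof.
move=> w_add; have k_le_K i : (k i <= K)%N.
  exact: dvdn_leq (lcm_fam_gt0 k k_gt0) (dvdn_lcm_fam k i).
rewrite /U_fun.
under eq_bigr => j _ do rewrite (prod_s_funE _ _ _ _ _ _ _ j k_gt0 k_le_K) mulr_sumr.
rewrite exchange_big -big_split /=; apply: eq_bigr => d /forallP d_dvd_k.
under eq_bigr => j _ do rewrite (fun_if (fun x => w j * x)) mulr0.
by rewrite -big_mkcond; apply: sum_multiples_lcm.
Qed.

Lemma prod_h_expnM (d : 'I_n -> nat) l :
  (forall i, completely_multiplicative (h i)) -> (forall i, 0 < d i)%N -> (0 < l)%N ->
  \prod_(i < n) h i ((lcm_fam d %/ d i) ^ a * l)%N =
  \prod_(i < n) h i (lcm_fam d %/ d i)%N ^+ a * \prod_(i < n) h i l.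
Proof.
move=> h_mul d_gt0 l_gt0; rewrite -big_split; apply: eq_bigr => i _.
rewrite completely_multiplicative_expnM // divn_gt0 //.
exact: dvdn_leq (lcm_fam_gt0 d d_gt0) (dvdn_lcm_fam d i).
Qed.

Lemma U_fun_expansion_multiplicative :
  completely_additive w -> (forall i, completely_multiplicative (h i)) ->
  U_fun a w f g h k =
     \sum_(d : {ffun 'I_n -> 'I_(K.+1)} | [forall i, (d i %| k i)%N])
        w ((lcm_fam (fun i => nat_of_ord (d i))) ^ a)%N
        * (\prod_(i < n) (f i (d i) * g i (k i %/ d i)%N
                          * h i (lcm_fam (fun i => nat_of_ord (d i)) %/ d i)%N ^+ a))
        * \sum_(1 <= l < (K %/ lcm_fam (fun i => nat_of_ord (d i))) ^ a + 1)
            \prod_(i < n) h i l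
   + \sum_(d : {ffun 'I_n -> 'I_(K.+1)} | [forall i, (d i %| k i)%N])
        (\prod_(i < n) (f i (d i) * g i (k i %/ d i)%N
                        * h i (lcm_fam (fun i => nat_of_ord (d i)) %/ d i)%N ^+ a))
        * \sum_(1 <= l < (K %/ lcm_fam (fun i => nat_of_ord (d i))) ^ a + 1)
            w l * \prod_(i < n) h i l.
Proof.
move=> w_add h_mul; rewrite U_fun_expansion //.
congr (_ + _); apply: eq_bigr => d /forallP d_dvd_k.
all: have d_gt0 i : (0 < d i)%N by exact: dvdn_gt0 (k_gt0 i) (d_dvd_k i).
all: under eq_big_nat => l /andP[l_gt0 _] do rewrite prod_h_expnM //.
all: rewrite [in RHS]big_split /=.
- by rewrite -mulr_sumr; ring.
- by under eq_big_nat => l _ do rewrite mulrCA; rewrite -mulr_sumr; ring.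
Qed.

End Expansion.

Theorem theorem2 (a n : nat) (ha : (0 < a)%N) (hn : (0 < n)%N)
  (k : 'I_n -> nat) (hk : forall i, (0 < k i)%N)
  (f g h : 'I_n -> arith) (w : arith) (hw : completely_additive w) :
  let K := lcm_fam k in
  (U_fun a w f g h k =
     \sum_(d : {ffun 'I_n -> 'I_(K.+1)} | [forall i, (d i %| k i)%N])
        w ((lcm_fam (fun i => nat_of_ord (d i))) ^ a)%N
        * (\prod_(i < n) (f i (d i) * g i (k i %/ d i)%N))
        * \sum_(1 <= l < (K %/ lcm_fam (fun i => nat_of_ord (d i))) ^ a + 1)
            \prod_(i < n) h i ((lcm_fam (fun i => nat_of_ord (d i)) %/ d i) ^ a * l)%N
   + \sum_(d : {ffun 'I_n -> 'I_(K.+1)} | [forall i, (d i %| k i)%N])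
        (\prod_(i < n) (f i (d i) * g i (k i %/ d i)%N))
        * \sum_(1 <= l < (K %/ lcm_fam (fun i => nat_of_ord (d i))) ^ a + 1)
            w l * \prod_(i < n) h i ((lcm_fam (fun i => nat_of_ord (d i)) %/ d i) ^ a * l)%N)
  /\
  ((forall i, completely_multiplicative (h i)) ->
   U_fun a w f g h k =
     \sum_(d : {ffun 'I_n -> 'I_(K.+1)} | [forall i, (d i %| k i)%N])
        w ((lcm_fam (fun i => nat_of_ord (d i))) ^ a)%N
        * (\prod_(i < n) (f i (d i) * g i (k i %/ d i)%N
                          * h i (lcm_fam (fun i => nat_of_ord (d i)) %/ d i)%N ^+ a))
        * \sum_(1 <= l < (K %/ lcm_fam (fun i => nat_of_ord (d i))) ^ a + 1)
            \prod_(i < n) h i l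
   + \sum_(d : {ffun 'I_n -> 'I_(K.+1)} | [forall i, (d i %| k i)%N])
        (\prod_(i < n) (f i (d i) * g i (k i %/ d i)%N
                        * h i (lcm_fam (fun i => nat_of_ord (d i)) %/ d i)%N ^+ a))
        * \sum_(1 <= l < (K %/ lcm_fam (fun i => nat_of_ord (d i))) ^ a + 1)
            w l * \prod_(i < n) h i l).
Proof.
split; first exact: U_fun_expansion.
exact: U_fun_expansion_multiplicative.
Qed.
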